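(* Let $t$ be a positive integer. (1) If there exists a good vector with respect to $t$ of length $2t$, then for every positive integer $n$ with $(4t+1)\mid n$, $N_P(n,2t+1,4t+1)\le (t+1)n$. (2) For every positive integer $n$ with $(4t+2)\mid n$, $N_P(n,2t+1,4t+2)\le (t+1)n$.
   Context: Good vector: for a positive integer $t$, a vector $\mathbf v=(v_1,\dots,v_{2t})\in[t]^{2t}$ or $\mathbf v\in\{0,\dots,t\}^{2t+1}$ is good w.r.t. $t$ if every $j\in[t]=\{1,\dots,t\}$ appears exactly twice in $\mathbf v$ and whenever $v_i=v_{i'}=j\in[t]$ with $i<i'$ then $i'-i=j$. Fix a finite field $\mathbb{F}_q$. An $(n,N,k,m)$-PIR array code over $\mathbb{F}_q$ is an $\mathbb{F}_q$-linear map $\mathbf x\in\mathbb{F}_q^n\mapsto(\mathbf c_1,\dots,\mathbf c_m)$ with buckets $\mathbf c_\ell\in\mathbb{F}_q^{N_\ell}$, $N_\ell\ge1$ independent of $\mathbf x$, $\sum_\ell N_\ell=N$, such that for each $i\in[n]$ there is a partition of $[m]$ into $k$ sets $R_1,\dots,R_k$ such that for each $j$, $x_i$ is an $\mathbb{F}_q$-linear combination of values $f_\ell(\mathbf c_\ell)$, $\ell\in R_j$, for some linear functionals $f_\ell$ (independent of $\mathbf x$). $N_P(n,k,m)$ is the minimum $N$ for which such a code exists. *)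

From HB Require Import structures.
From mathcomp Require Import all_boot all_order all_algebra all_field.
From mathcomp Require Import boolp.
Set Implicit Arguments. Unset Strict Implicit. Unset Printing Implicit Defensive.
Import GRing.Theory.

Definition good_vector_2t (t : nat) (v : seq nat) : Prop :=
  [/\ size v = 2 * t,
      all (fun x => 0 < x <= t) v,
      (forall j, 0 < j <= t -> count_mem j v = 2) &
      (forall i i', i < i' -> i' < size v -> nth 0 v i = nth 0 v i' ->
         0 < nth 0 v i -> i' - i = nth 0 v i)].

Local Open Scope ring_scope.

(* An (n, N, k, m)-PIR array code over F: bucket sizes Ns l >= 1 summing to N,
   bucket l stores c_l = x *m enc l (an F-linear map of x in F^n); for every
   i there is a partition of the buckets into k classes (part : 'I_m -> 'I_k,
   class j = part^-1(j)) and linear functionals f_l (column vectors; the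
   coefficients of the linear combination are absorbed into f_l) such that
   for each class j, x_i = sum_{l in R_j} f_l(c_l) for all x. *)
Definition PIR_array_code (F : fieldType) (n N k m : nat)
    (Ns : 'I_m -> nat) (enc : forall l : 'I_m, 'M[F]_(n, Ns l)) : Prop :=
  [/\ (forall l, (0 < Ns l)%N),
      (\sum_(l < m) Ns l)%N = N &
      forall i : 'I_n, exists part : 'I_m -> 'I_k,
        exists f : forall l : 'I_m, 'cV[F]_(Ns l),
          forall (j : 'I_k) (x : 'rV[F]_n),
            x 0 i = \sum_(l < m | part l == j) (x *m enc l *m f l) 0 0].

Definition has_PIR_code (F : fieldType) (n k m N : nat) : Prop :=
  exists (Ns : 'I_m -> nat) (enc : forall l : 'I_m, 'M[F]_(n, Ns l)),
    @PIR_array_code F n N k m Ns enc.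

Lemma has_PIR_code_ex (F : fieldType) n k m :
  (exists N, has_PIR_code F n k m N) ->
  exists N, (fun N => `[< has_PIR_code F n k m N >]) N.
Proof. by case=> N H; exists N; apply/asboolP. Qed.

(* N_P(n,k,m): the minimum N for which an (n,N,k,m)-PIR array code over F
   exists (set to 0 if no such code exists; this case never arises in the
   statement since replication codes always exist for k <= m). *)
Definition N_P (F : fieldType) (n k m : nat) : nat :=
  match pselect (exists N, has_PIR_code F n k m N) with
  | left h => ex_minn (has_PIR_code_ex h)
  | right _ => 0%N
  end.

(* Index the n = (M+1) q data symbols as x_(a,r), a in Z_(M+1), r < q. Bucket l
   stores t+1 blocks of q symbols: x_(l,r), and for each j < t the sums
   x_(l-A_j,r) + x_(l-B_j,r), where A_j, B_j are [lead j false], [lead j true].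
   To read x_(a,r), bucket a+A_j gives x_(a,r) + x_(a+A_j-B_j,r) and bucket
   a+(A_j-B_j) gives the second term; symmetrically with A_j and B_j swapped.
   Together with bucket a alone this yields 2t+1 disjoint recovery sets,
   provided the 4t+1 offsets 0, A_j, B_j, A_j-B_j, B_j-A_j are distinct mod M+1;
   the storage is (t+1) n.
   For M+1 = 4t+2 take A_j = 2j+3, B_j = 4t+1-2j.  For M+1 = 4t+1 a good vector
   pairs the positions 0..2t-1 as p_j < p_j + j+1; take B_j = t+1+p_j and
   A_j = B_j + j+1, so that A_j - B_j = j+1. *)

From mathcomp Require Import all_boot all_order all_algebra all_field.
From mathcomp Require Import zify.
From mathcomp Require Import boolp.
Set Implicit Arguments. Unset Strict Implicit. Unset Printing Implicit Defensive.
Import GRing.Theory.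
Local Open Scope ring_scope.

Lemma sum_pick_inj (R : nmodType) (I J : finType) (h : I -> J) (G : I -> R) :
  injective h -> \sum_j oapp G 0 [pick i | h i == j] = \sum_i G i.
Proof.
move=> h_inj; rewrite (bigID (mem (codom h))) /= [X in _ + X]big1 ?addr0; last first.
  by move=> j /negP hj; case: pickP => //= i /eqP hij; case: hj; rewrite -hij codom_f.
rewrite (reindex_omap h (fun j => [pick i | h i == j])) /=; last first.
  by move=> j /codomP [i ->]; case: pickP => [i' /eqP /h_inj -> //| /(_ i)]; rewrite eqxx.
apply: eq_big => [i|i _]; case: pickP => [i' /eqP /h_inj -> //| /(_ i)];
  by rewrite ?codom_f ?eqxx.
Qed.

Lemma sum_indicator_mul (R : nzSemiRingType) (I : finType) (G : I -> R) (c : I) :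
  \sum_i (i == c)%:R * G i = G c.
Proof.
by rewrite (bigD1 c) //= eqxx mul1r big1 ?addr0 // => i /negbTE ->; rewrite mul0r.
Qed.

Lemma mxvec_mul_scale_delta (F : comNzRingType) m n (A : 'M[F]_(m, n)) i j (k : F) :
  (mxvec A *m (k *: delta_mx (mxvec_index i j) (0 : 'I_1))) 0 0 = k * A i j.
Proof.
rewrite -scalemxAr [LHS]mxE.
rewrite [in LHS]mxE (bigD1 (mxvec_index i j)) //= mxvecE mxE !eqxx mulr1.
by rewrite big1 ?addr0 // => k' /negbTE nk; rewrite mxE nk mulr0.
Qed.

Lemma val_subZp_le M (a b : 'I_M.+1) : (b <= a)%N -> nat_of_ord (a - b) = (a - b)%N.
Proof.
move=> ba; rewrite /= modnDmr (_ : (a + (M.+1 - b) = a - b + M.+1)%N) ?modnDr.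
  by rewrite modn_small //; have := ltn_ord a; lia.
by have := ltn_ord b; lia.
Qed.

Lemma val_subZp_gt M (a b : 'I_M.+1) : (a < b)%N -> nat_of_ord (a - b) = (M.+1 + a - b)%N.
Proof.
by move=> ab; rewrite /= modnDmr modn_small; have := ltn_ord b; lia.
Qed.

Section CyclicCode.

Variables (F : fieldType) (t M q : nat) (lead : 'I_t -> bool -> 'I_M.+1).

Definition bucket_mx (l : 'I_M.+1) : 'M[F]_(t.+1, M.+1) :=
  \matrix_(b, a)
    if unlift ord0 b is Some j then \sum_s (a == l - lead j s)%:R else (a == l)%:R.

Lemma bucket_mxE (X : 'M[F]_(M.+1, q)) l b r :
  (bucket_mx l *m X) b r =
    if unlift ord0 b is Some j then \sum_s X (l - lead j s) r else X l r.
Proof.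
rewrite mxE; under eq_bigr do rewrite mxE.
case: (unlift ord0 b) => [j|]; last exact: sum_indicator_mul.
under eq_bigr do rewrite mulr_suml.
by rewrite exchange_big; apply: eq_bigr => s _; rewrite sum_indicator_mul.
Qed.

(* The buckets used to read x_(a,r): None is bucket a itself; Some (j, s, false)
   is bucket a + lead j s, read at block j+1; Some (j, s, true) is bucket
   a + (lead j s - lead j (~~ s)), read at block 0 and subtracted. *)
Definition role := option ('I_t * bool * bool).

Definition role_pos (rh : role) : 'I_M.+1 :=
  match rh with
  | None => 0
  | Some (j, s, false) => lead j s
  | Some (j, s, true) => lead j s - lead j (~~ s)
  end.

Definition role_row (rh : role) : 'I_t.+1 :=
  if rh is Some (j, _, false) then lift ord0 j else ord0.

Definition role_sign (rh : role) : F := if rh is Some (_, true) then -1 else 1.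

Definition role_class (rh : role) : option ('I_t * bool) := omap fst rh.

Lemma role_contribution (X : 'M[F]_(M.+1, q)) a r rh :
  role_sign rh * (bucket_mx (a + role_pos rh) *m X) (role_row rh) r =
  match rh with
  | None => X a r
  | Some (j, s, false) => X a r + X (a + (lead j s - lead j (~~ s))) r
  | Some (j, s, true) => - X (a + (lead j s - lead j (~~ s))) r
  end.
Proof.
rewrite bucket_mxE; case: rh => [[[j s] []]|];
  rewrite /= ?unlift_none ?liftK ?mul1r ?mulN1r ?addr0 //.
by rewrite big_bool; case: s; rewrite /= addrK addrA // addrC.
Qed.

Lemma role_class_sum (X : 'M[F]_(M.+1, q)) a r c :
  \sum_(rh | role_class rh == c)
     role_sign rh * (bucket_mx (a + role_pos rh) *m X) (role_row rh) r = X a r.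
Proof.
under eq_bigr do rewrite role_contribution.
case: c => [[j s]|]; last by rewrite (big_pred1 None) //; case=> [[]|].
have ne_rows : Some (j, s, true) != Some (j, s, false) :> role by apply/eqP => -[].
rewrite (bigD1 (Some (j, s, false))) ?eqxx // (bigD1 (Some (j, s, true))) /= ?eqxx //.
rewrite big1 ?addr0 ?addrK // => -[[[j' s'] k]|] //=.
by case/andP=> /andP[/eqP[-> ->]]; case: k; rewrite eqxx.
Qed.

Lemma card_role_classes : #|{: option ('I_t * bool)}| = (2 * t).+1.
Proof. by rewrite card_option card_prod card_ord card_bool mulnC. Qed.

Definition class_ord (c : option ('I_t * bool)) : 'I_(2 * t).+1 :=
  cast_ord card_role_classes (enum_rank c).

Lemma class_ord_inj : injective class_ord.
Proof. by move=> c c' /cast_ord_inj /enum_rank_inj. Qed.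

Lemma class_ord_surj J : exists c, class_ord c = J.
Proof.
exists (enum_val (cast_ord (esym card_role_classes) J)).
by rewrite /class_ord enum_valK cast_ordKV.
Qed.

Lemma role_pos_inj (pos : 'I_t -> bool -> bool -> nat) :
  (forall j s k, role_pos (Some (j, s, k)) = pos j s k :> nat) ->
  (forall j s k, 0 < pos j s k)%N ->
  (forall j s k j' s' k', pos j s k = pos j' s' k' -> (j, s, k) = (j', s', k')) ->
  injective role_pos.
Proof.
move=> posE pos_gt0 pos_inj [[[j s] k]|] [[[j' s'] k']|] /(congr1 (@nat_of_ord _));
  rewrite ?posE //=.
- by move/pos_inj->.
- by move: (pos_gt0 j s k); lia.
- by move: (pos_gt0 j' s' k'); lia.
Qed.

Lemma cyclic_PIR_code :
  (0 < q)%N -> injective role_pos ->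
  has_PIR_code F (M.+1 * q) (2 * t).+1 M.+1 (t.+1 * (M.+1 * q)).
Proof.
move=> q_gt0 pos_inj.
exists (fun _ => (t.+1 * q)%N), (fun l => lin_mx (mulmx (bucket_mx l))); split.
- by move=> _; rewrite muln_gt0.
- by rewrite sum_nat_const card_ord mulnCA.
case/mxvec_indexP=> a r.
pose role_of l := [pick rh | a + role_pos rh == l].
exists (fun l => class_ord (oapp role_class None (role_of l))).
exists (fun l => oapp (fun rh => role_sign rh *: delta_mx (mxvec_index (role_row rh) r) 0)
                      0 (role_of l)).
move=> J x; have [c <-] := class_ord_surj J.
rewrite -[x]vec_mxK; set X := vec_mx x.
rewrite mxvecE -(role_class_sum X a r c) big_mkcond [RHS]big_mkcond /=.
rewrite -(sum_pick_inj (h := fun rh => a + role_pos rh)); last by move=> ? ? /addrI /pos_inj.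
apply: eq_bigr => l _; rewrite /role_of.
case: pickP => [rh /eqP <- | _] /=; last by rewrite mulmx0 mxE if_same.
by rewrite (inj_eq class_ord_inj) mul_vec_lin mxvec_mul_scale_delta.
Qed.

End CyclicCode.

Local Close Scope ring_scope.

Section GoodVector.

Variables (t : nat) (v : seq nat).
Hypothesis v_good : good_vector_2t t v.

Definition occurrence (j : nat) (k : bool) : nat := index j.+1 v + (if k then j.+1 else 0).

Lemma good_vector_occurrence j k : j < t ->
  nth 0 v (occurrence j k) = j.+1 /\ occurrence j k < 2 * t.
Proof.
case: v_good => size_v _ count_v dist_v j_lt.
have count_j : count_mem j.+1 v = 2 by apply: count_v; lia.
have j_in : j.+1 \in v by rewrite -has_pred1 has_count count_j.
set p := index j.+1 v.
have p_lt : p < size v by rewrite index_mem.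
have nth_p : nth 0 v p = j.+1 by rewrite nth_index.
have count_drop : count_mem j.+1 (drop p.+1 v) = 1.
  have count_take : count_mem j.+1 (take p v) = 0.
    by apply/count_memPn; rewrite in_take // ltnn.
  move: count_j; rewrite -{1}(cat_take_drop p v) count_cat count_take.
  by rewrite (drop_nth 0 p_lt) nth_p /= eqxx; case.
have j_in_drop : j.+1 \in drop p.+1 v by rewrite -has_pred1 has_count count_drop.
set i := index j.+1 (drop p.+1 v).
have i_lt : i < size v - p.+1 by rewrite -size_drop index_mem.
have nth_i : nth 0 v (p.+1 + i) = j.+1 by rewrite -nth_drop nth_index.
have i_eq : i = j.
  have := dist_v p (p.+1 + i); rewrite nth_p nth_i.
  have ->: p.+1 + i - p = i.+1 by lia.
  by move=> dist_i; apply/succn_inj/dist_i => //; lia.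
rewrite /occurrence -/p size_v in p_lt i_lt *.
by case: k; rewrite ?addn0 -?i_eq ?addnS -?addSn ?nth_i ?nth_p; split=> //; lia.
Qed.

Lemma occurrence_inj j j' k k' : j < t -> j' < t ->
  occurrence j k = occurrence j' k' -> j = j' /\ k = k'.
Proof.
move=> j_lt j'_lt eq_occ.
have [nth_j _] := good_vector_occurrence k j_lt.
have [nth_j' _] := good_vector_occurrence k' j'_lt.
have [eq_j] : j.+1 = j'.+1 by rewrite -nth_j eq_occ nth_j'.
by move: eq_occ {nth_j nth_j'}; rewrite /occurrence eq_j; case: k; case: k'; split; lia.
Qed.

End GoodVector.

Lemma PIR_code_good_vector (F : fieldType) t q v :
  0 < q -> good_vector_2t t v ->
  has_PIR_code F ((4 * t).+1 * q) (2 * t).+1 (4 * t).+1 (t.+1 * ((4 * t).+1 * q)).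
Proof.
move=> q_gt0 v_good.
have occ_lt j k : j < t -> occurrence v j k < 2 * t.
  by move=> /(good_vector_occurrence v_good k) [].
pose lead (j : 'I_t) s : 'I_(4 * t).+1 := inord (t.+1 + occurrence v j (~~ s)).
have leadE (j : 'I_t) s : lead j s = t.+1 + occurrence v j (~~ s) :> nat.
  by rewrite /lead inordK //; have := occ_lt j (~~ s) (ltn_ord j); lia.
have posE (j : 'I_t) s k : role_pos lead (Some (j, s, k)) =
    (if k then (if s then 4 * t - j else j.+1) else t.+1 + occurrence v j (~~ s)) :> nat.
  case: k; last exact: leadE.
  case: s; [rewrite val_subZp_gt | rewrite val_subZp_le];
    rewrite !leadE /occurrence /=; lia.
apply: (cyclic_PIR_code F (lead := lead) q_gt0).
apply: (role_pos_inj posE) => [j s k | j s k j' s' k'].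
  by move: (ltn_ord j); case: k; case: s; lia.
case: k k' => [] [] eq_pos; last first.
  have /addnI eq_occ := eq_pos.
  by have [/ord_inj -> /negb_inj ->] := occurrence_inj v_good (ltn_ord j) (ltn_ord j') eq_occ.
all: move: eq_pos (occ_lt j (~~ s) (ltn_ord j)) (occ_lt j' (~~ s') (ltn_ord j')).
all: move: (ltn_ord j) (ltn_ord j'); case: s s' => [] [] /= *.
all: first [lia | by have /ord_inj -> : j = j' :> nat by lia].
Qed.

Lemma PIR_code_4t2 (F : fieldType) t q :
  0 < q ->
  has_PIR_code F ((4 * t).+2 * q) (2 * t).+1 (4 * t).+2 (t.+1 * ((4 * t).+2 * q)).
Proof.
move=> q_gt0.
pose lead (j : 'I_t) (s : bool) : 'I_(4 * t).+2 :=
  inord (if s then 4 * t + 1 - 2 * j else 2 * j + 3).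
have leadE (j : 'I_t) s : lead j s = (if s then 4 * t + 1 - 2 * j else 2 * j + 3) :> nat.
  by rewrite /lead inordK //; move: (ltn_ord j); case: s; lia.
have posE (j : 'I_t) s k : role_pos lead (Some (j, s, k)) =
    (if k then (if s then 4 * t - 2 - 4 * j else 4 * j + 4)
     else if s then 4 * t + 1 - 2 * j else 2 * j + 3) :> nat.
  case: k; last exact: leadE.
  move: (ltn_ord j); case: s => j_lt; [rewrite val_subZp_le | rewrite val_subZp_gt];
    rewrite !leadE /=; lia.
apply: (cyclic_PIR_code F (lead := lead) q_gt0).
apply: (role_pos_inj posE) => [j s k | j s k j' s' k'].
  by move: (ltn_ord j); case: k; case: s; lia.
move: (ltn_ord j) (ltn_ord j'); case: s s' k k' => [] [] [] [] /= *.
all: first [lia | by have /ord_inj -> : j = j' :> nat by lia].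
Qed.

Lemma N_P_le (F : fieldType) n k m N : has_PIR_code F n k m N -> N_P F n k m <= N.
Proof.
rewrite /N_P => code_N; case: pselect => [ex_code | []]; last by exists N.
by case: ex_minnP => N' _; apply; apply/asboolP.
Qed.

Theorem corollary4p3 (F : finFieldType) (t : nat) (ht : (0 < t)%N) :
  ((exists v : seq nat, good_vector_2t t v) ->
     forall n : nat, (0 < n)%N -> (4 * t + 1 %| n)%N ->
       (N_P F n (2 * t + 1) (4 * t + 1) <= (t + 1) * n)%N)
  /\
  (forall n : nat, (0 < n)%N -> (4 * t + 2 %| n)%N ->
       (N_P F n (2 * t + 1) (4 * t + 2) <= (t + 1) * n)%N).
Proof.
split=> [[v v_good] n | n] n_gt0 /dvdnP[q n_eq]; subst n;
  have q_gt0 : 0 < q by move: n_gt0; rewrite muln_gt0 => /andP[].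
  by rewrite mulnC !addn1; apply: N_P_le; exact: PIR_code_good_vector v_good.
by rewrite mulnC addn2 !addn1; apply: N_P_le; exact: PIR_code_4t2.
Qed.
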